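(* Let $X$ be a finite set with $|X|=n$, $0\notin X$, $W=X\cup\{0\}$. Let $\mathfrak{V}$ be a $\big(\binom{n}{2}_{\,n-2}\ \binom{n}{3}_{\,3}\big)$-configuration whose point set is $\mathcal{P}_2(X)$, and let $\mathfrak{M}$ be the structure with point set $\mathcal{P}_2(W)$ whose lines are the lines of $\mathfrak{V}$ together with all sets $\{\{0,x\},\{0,y\},\{x,y\}\}$ for distinct $x,y\in X$. Let $H$ be a hyperplane of $\mathfrak{M}$, and on $X$ define $x\sim y$ iff $x=y$, or $x\neq y$ and $\{x,y\}\in H$ (an equivalence relation). Let $x\in X$. If there is $z\in[x]_\sim$ with $\{0,z\}\in H$, then $\{0,y\}\in H$ for every $y\in[x]_\sim$.
   Context: $\mathcal{P}_2(Y)$ denotes the set of $2$-element subsets of $Y$; $[x]_\sim$ is the equivalence class of $x$. A $(v_r\ b_k)$-configuration is a partial linear space with $v$ points and $b$ lines, each point on exactly $r$ lines and each line containing exactly $k$ points. A subspace is a set of points containing every line that meets it in at least two points; a hyperplane is a proper subspace meeting every line. (A point $x\in X$ of the original description is identified with the point $\{0,x\}$.) *)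

From mathcomp Require Import all_boot.
Set Implicit Arguments. Unset Strict Implicit. Unset Printing Implicit Defensive.

Definition P2 (Y : finType) : {set {set Y}} := [set A : {set Y} | #|A| == 2].

Definition is_config (Pt : finType) (P : {set Pt}) (L : {set {set Pt}})
    (v b r k : nat) : Prop :=
  [/\ #|P| = v, #|L| = b,
      (forall l, l \in L -> l \subset P /\ #|l| = k),
      (forall p, p \in P -> #|[set l in L | p \in l]| = r) &
      (forall p q, p \in P -> q \in P -> p != q ->
         #|[set l in L | (p \in l) && (q \in l)]| <= 1)].

(* W = X u {0} is modelled as option X, with None playing the role of 0;
   a point {x,y} of P_2(X) is identified with {Some x, Some y}. *)
Definition emb (T : finType) (A : {set T}) : {set option T} := Some @: A.

Definition triangle (T : finType) (x y : T) : {set {set option T}} :=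
  [set [set None; Some x]; [set None; Some y]; [set Some x; Some y]].

Definition M_lines (T : finType) (LV : {set {set {set T}}})
    : {set {set {set option T}}} :=
  [set (@emb T) @: l | l : {set {set T}} in LV] :|:
  [set triangle x y | x in T, y in T & x != y].

Definition subspace (Pt : finType) (P : {set Pt}) (L : {set {set Pt}})
    (S : {set Pt}) : Prop :=
  S \subset P /\ (forall l, l \in L -> 2 <= #|l :&: S| -> l \subset S).

Definition hyperplane (Pt : finType) (P : {set Pt}) (L : {set {set Pt}})
    (S : {set Pt}) : Prop :=
  [/\ subspace P L S, S != P & (forall l, l \in L -> l :&: S != set0)].

Definition simH (T : finType) (H : {set {set option T}}) (x y : T) : bool :=
  (x == y) || ((x != y) && ([set Some x; Some y] \in H)).

From mathcomp Require Import all_boot.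

(* Only the triangles {0x, 0y, xy} of M matter: a subspace containing two of
   their points contains the third, so {0a} in H and {a,b} in H give {0b} in H;
   going from z back to x and then on to y proves the claim. *)

Lemma subspace_line {Pt : finType} {P : {set Pt}} {L : {set {set Pt}}}
    {S : {set Pt}} {l : {set Pt}} {p q : Pt} :
  subspace P L S -> l \in L -> p != q ->
  p \in l :&: S -> q \in l :&: S -> l \subset S.
Proof.
move=> [_ closedS] lL pq pS qS; apply: closedS => //.
apply: leq_trans (_ : #|[set p; q]| <= _); first by rewrite cards2 pq.
by apply/subset_leq_card/subsetP => u /set2P [] ->.
Qed.

Lemma triangle_M_lines {T : finType} (LV : {set {set {set T}}}) {a b : T} :
  a != b -> triangle a b \in M_lines LV.
Proof. by move=> ab; rewrite inE; apply/orP; right; apply/imset2P; exists a b; rewrite ?inE. Qed.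

Lemma pair0_neq_pair {T : finType} (a b c : T) :
  [set None; Some a] != [set Some b; Some c].
Proof.
apply/negP => /eqP E.
by have := set21 (None : option T) (Some a); rewrite E !inE.
Qed.

Lemma subspace_pair0_transfer {T : finType} {LV : {set {set {set T}}}}
    {H : {set {set option T}}} {a b : T} :
  subspace (P2 (option T)) (M_lines LV) H -> a != b ->
  [set None; Some a] \in H -> [set Some a; Some b] \in H ->
  [set None; Some b] \in H.
Proof.
move=> subH ab ha hab.
have tri_sub := subspace_line subH (triangle_M_lines LV ab) (pair0_neq_pair a a b).
by apply: (subsetP (tri_sub _ _)); rewrite !inE ?ha ?hab eqxx ?orbT.
Qed.

Theorem lemma3p2 (T : finType) (LV : {set {set {set T}}})
  (hV : is_config (P2 T) LV 'C(#|T|, 2) 'C(#|T|, 3) (#|T| - 2) 3)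
  (H : {set {set option T}})
  (hH : hyperplane (P2 (option T)) (M_lines LV) H)
  (x : T) :
  (exists z : T, simH H x z /\ [set None; Some z] \in H) ->
  forall y : T, simH H x y -> [set None; Some y] \in H.
Proof.
have [subH _ _] := hH.
move=> [z [xz hz]].
have hx : [set None; Some x] \in H.
  case/orP: xz => [/eqP -> //|/andP [xz hxz]].
  by apply: (subspace_pair0_transfer subH _ hz); rewrite 1?eq_sym // setUC.
move=> y /orP [/eqP <- //|/andP [xy hxy]].
exact: (subspace_pair0_transfer subH xy hx hxy).
Qed.
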